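(* Let $\mathcal{G}$ be a multi-player Markov game and suppose there exists a stationary product policy $\pi^\star=(\pi^\star_1,\dots,\pi^\star_n)$ such that $\sum_{i=1}^nV_i^{\pi^\star_i,\pi_{-i}}(\rho)-\sum_{i=1}^nV_i^{\pi}(\rho)\ge0$ for every stationary product policy $\pi$. Then, with $x^\star$ the parameterization of $\pi^\star$, $$\langle x-x^\star,F_{\mathcal{G}}(x)\circ\Lambda(x,x^\star)\rangle\ge0\quad\text{for all }x\in\mathcal{X}.$$ In particular, if $\mathcal{G}$ admits a single controller $c$, then $\langle x-x^\star,F_{\mathcal{G}}(x)\circ A(x)\circ W(x^\star)\rangle\ge0$ for all $x\in\mathcal{X}$, where $A_i(x)[s,a_i]=1$ and $W_i(x^\star)[s,a_i]=1$ for $i\ne c$, while $A_c(x)[s,a_c]=(\tilde d^{\pi_c}_\rho[s])^{-1}$ and $W_c(x^\star)[s,a_c]=\tilde d^{\pi^\star_c}_\rho[s]$.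
   Context: A multi-player Markov game: players $[n]$; finite states $\mathcal{S}$; finite nonempty action sets $\mathcal{A}_i$, $\mathcal{A}=\prod_i\mathcal{A}_i$; transitions $\mathbb{P}(s'\mid s,a)$ with $\zeta:=\min_{(s,a)}(1-\sum_{s'}\mathbb{P}(s'\mid s,a))>0$ (the remaining mass is the termination probability); rewards $R_i:\mathcal{S}\times\mathcal{A}\to[-1,1]$; initial distribution $\rho$ with full support. Stationary policies $\pi_i:\mathcal{S}\to\Delta(\mathcal{A}_i)$ are directly parameterized by $x_i\in\Delta(\mathcal{A}_i)^{\mathcal{S}}$, $x_{i,s}[a_i]=\pi_i(a_i\mid s)$; $\mathcal{X}=\prod_i\Delta(\mathcal{A}_i)^{\mathcal{S}}$. $V_i^\pi(s)=\mathbb{E}_\pi[\sum_{h=0}^HR_i(s_h,a_h)\mid s_0=s]$ ($H$ the last step before termination), $V_i^\pi(\rho)=\mathbb{E}_{s\sim\rho}V_i^\pi(s)$. $F_{\mathcal{G}}(x)=-(\nabla_{x_1}V_1^\pi(\rho),\dots,\nabla_{x_n}V_n^\pi(\rho))$. Unnormalized visitation $\tilde d^\pi_\rho[s]=\mathbb{E}_{s_0\sim\rho}\sum_{h\ge0}\mathbb{P}^\pi(s_h=s\mid s_0)$. $\Lambda(x,x^\star)=(\Lambda_1,\dots,\Lambda_n)$ with $\Lambda_i(x,x^\star)[s,a_i]=\tilde d^{\pi^\star_i,\pi_{-i}}_\rho[s]/\tilde d^{\pi}_\rho[s]$. Single controller $c$: $\mathbb{P}(\cdot\mid s,a)$ depends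 on $a$ only via $a_c$; then $\tilde d^\pi_\rho$ depends only on $\pi_c$ and is written $\tilde d^{\pi_c}_\rho$. $\circ$ is the coordinatewise product. *)

From HB Require Import structures.
From mathcomp Require Import all_boot all_order all_algebra.
From mathcomp Require Import all_classical all_reals all_analysis.
Set Implicit Arguments. Unset Strict Implicit. Unset Printing Implicit Defensive.
Import Order.TTheory GRing.Theory Num.Theory numFieldNormedType.Exports.
Local Open Scope ring_scope.

Section MarkovGame.
Variables (R : realType) (n : nat) (S : finType) (A : 'I_n -> finType).

Definition jact := {dffun forall i : 'I_n, A i}.

(* directly parameterized (possibly non-normalized) policy profiles:
   x i s a = x_{i,s}[a] = pi_i(a | s) *)
Definition profile := forall i : 'I_n, S -> A i -> R.

Definition inX (x : profile) : Prop :=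
  forall i s, (forall a, 0 <= x i s a) /\ \sum_(a : A i) x i s a = 1.

(* (pi'_i, pi_{-i}) : replace player i's component of x by y *)
Definition deviate (x : profile) (i : 'I_n) (y : S -> A i -> R) : profile :=
  @dfwith _ (fun j : 'I_n => S -> A j -> R) x i y.

Definition perturb (x : profile) (i : 'I_n) (s : S) (a : A i) (t : R) : profile :=
  @dfwith _ (fun j : 'I_n => S -> A j -> R) x i (fun s' b => x i s' b + t * ((s' == s) && (b == a))%:R).

Variables (P : S -> jact -> S -> R) (Rw : 'I_n -> S -> jact -> R) (rho : S -> R).

Definition jprob (x : profile) (s : S) (a : jact) : R := \prod_(i < n) x i s (a i).

Definition Ppi (x : profile) (s s' : S) : R := \sum_(a : jact) jprob x s a * P s a s'.

Definition rpi (x : profile) (i : 'I_n) (s : S) : R :=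
  \sum_(a : jact) jprob x s a * Rw i s a.

(* h-step probabilities P^pi(s_h = s' | s_0 = s) (before termination) *)
Fixpoint Ph (x : profile) (h : nat) (s s' : S) : R :=
  match h with
  | 0 => (s == s')%:R
  | h'.+1 => \sum_(u : S) Ph x h' s u * Ppi x u s'
  end.

Definition V (x : profile) (i : 'I_n) (s : S) : R :=
  limn (series ((fun h => \sum_(s' : S) Ph x h s s' * rpi x i s') : R ^nat)).

Definition Vrho (x : profile) (i : 'I_n) : R := \sum_(s : S) rho s * V x i s.

Definition dvis (x : profile) (s : S) : R :=
  \sum_(s0 : S) rho s0 * limn (series ((fun h => Ph x h s0 s) : R ^nat)).

(* F_G(x) = -(grad_{x_1} V_1(rho), ..., grad_{x_n} V_n(rho)), coordinatewise
   as partial derivatives w.r.t. x_{i,s}[a] *)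
Definition FG (x : profile) (i : 'I_n) (s : S) (a : A i) : R :=
  - derive1 (fun t : R => Vrho (perturb x s a t) i) 0.

Definition Lambda (x xs : profile) (i : 'I_n) (s : S) (a : A i) : R :=
  dvis (deviate x (xs i)) s / dvis x s.

Definition single_controller (c : 'I_n) : Prop :=
  forall s (a a' : jact), a c = a' c -> forall s', P s a s' = P s a' s'.

End MarkovGame.

(* The policy gradient theorem gives F_i(x)[s, a] = - d~^pi_rho[s] Q_i^pi(s, a); multiplying by
   Lambda_i replaces d~^pi by the visitation of the deviation (pi*_i, pi_-i), and the
   performance difference lemma turns sum_(s,a) (x_i - x*_i) (F o Lambda)_i into
   V_i^(pi*_i, pi_-i)(rho) - V_i^pi(rho).  Summing over i gives the assumed nonnegative gap.
   Under a single controller c the visitation only depends on the controller's policy, so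
   Lambda_i = 1 for i <> c and Lambda_c = A_c W_c.
   Values, visitations and their derivatives are all Neumann series sum_h M^h r of a kernel M
   with row sums below 1; differentiability follows from contraction estimates. *)

From HB Require Import structures.
From mathcomp Require Import all_boot all_order all_algebra.
From mathcomp Require Import all_classical all_reals all_analysis.
From mathcomp Require Import ring lra.
Import Order.TTheory GRing.Theory Num.Theory numFieldNormedType.Exports.
Local Open Scope ring_scope.
Local Open Scope classical_set_scope.

Set Implicit Arguments. Unset Strict Implicit. Unset Printing Implicit Defensive.

Lemma derive1_at0_of_error_bound (R : realType) (f : R -> R) (L C d : R) :
  0 < d -> 0 <= C ->
  (forall t, t != 0 -> `|t| <= d -> `|t^-1 * (f t - f 0) - L| <= `|t| * C) ->
  derive1 f 0 = L.
Proof.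
move=> d0 C0 hf; apply: cvg_lim; first exact: norm_hausdorff.
apply/cvgrPdist_le => eps eps0.
have de0 : 0 < Num.min d (eps / (C + 1)) by rewrite lt_min d0 divr_gt0 // ltr_wpDl.
near=> t.
have t0 : t != 0 by near: t; exact: nbhs_dnbhs_neq.
have : `|t| <= Num.min d (eps / (C + 1)) by near: t; exact: dnbhs0_le.
rewrite le_min => /andP[td te].
rewrite addr0 distrC; apply: le_trans (hf t t0 td) _.
apply: le_trans (_ : `|t| * (C + 1) <= _); first by rewrite ler_wpM2l // lerDl.
by rewrite -ler_pdivlMr // ltr_wpDl.
Unshelve. all: by end_near.
Qed.

Section Kernel.
Variables (R : realType) (S : finType).
Implicit Types (M D : S -> S -> R) (r e : S -> R).

Fixpoint kpow M h s s' : R :=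
  if h is h'.+1 then \sum_u kpow M h' s u * M u s' else (s == s')%:R.

Definition kiter M r h s := \sum_s' kpow M h s s' * r s'.

Definition resolvent M r s := limn (series (fun h => kiter M r h s)).

Definition row_norm_le M (g : R) := forall u, \sum_w `|M u w| <= g.

Definition dirac (s : S) : S -> R := fun u => (u == s)%:R.

Lemma diracC s u : dirac s u = dirac u s.
Proof. by rewrite /dirac eq_sym. Qed.

Lemma sum_dirac_mull (f : S -> R) s : \sum_u dirac s u * f u = f s.
Proof.
rewrite (bigD1 s) //= /dirac eqxx mul1r big1 ?addr0 // => u /negbTE ->.
by rewrite mul0r.
Qed.

Lemma sum_dirac_mulr (f : S -> R) s : \sum_u f u * dirac s u = f s.
Proof. by under eq_bigr do rewrite mulrC; exact: sum_dirac_mull. Qed.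

Lemma le_sum_nonneg (f : S -> R) u : (forall v, 0 <= f v) -> f u <= \sum_v f v.
Proof. by move=> f0; rewrite (bigD1 u) //= lerDl sumr_ge0. Qed.

Lemma le_sum_norm (f : S -> R) u : `|f u| <= \sum_v `|f v|.
Proof. by apply: (@le_sum_nonneg (fun v => `|f v|)). Qed.

Lemma sum_mulDl_scale (a b f : S -> R) (c : R) :
  \sum_u (a u + c * b u) * f u = \sum_u a u * f u + c * \sum_u b u * f u.
Proof.
by rewrite big_distrr -big_split /=; apply: eq_bigr => u _; rewrite mulrDl mulrA.
Qed.

Lemma sum_mulBr (a f h : S -> R) :
  \sum_u a u * (f u - h u) = \sum_u a u * f u - \sum_u a u * h u.
Proof. by rewrite -sumrB; apply: eq_bigr => u _; rewrite mulrBr. Qed.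

Lemma sum_mulrCA (a f : S -> R) (c : R) :
  \sum_u a u * (c * f u) = c * \sum_u a u * f u.
Proof. by rewrite big_distrr; apply: eq_bigr => u _ /=; rewrite mulrCA. Qed.

Lemma norm_sum_mul_le (a f : S -> R) (K B : R) : \sum_u `|a u| <= K -> 0 <= B ->
  (forall u, `|f u| <= B) -> `|\sum_u a u * f u| <= K * B.
Proof.
move=> hK B0 hf; apply: le_trans (ler_norm_sum _ _ _) _.
apply: le_trans (_ : \sum_u `|a u| * B <= _).
  by apply: ler_sum => u _; rewrite normrM ler_wpM2l.
by rewrite -big_distrl /= ler_wpM2r.
Qed.

Lemma kpowS M h s s' : kpow M h.+1 s s' = \sum_u kpow M h s u * M u s'.
Proof. by []. Qed.

Lemma kpow0 M s u : kpow M 0 s u = dirac s u.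
Proof. by rewrite /= /dirac eq_sym. Qed.

Lemma kpowSl M h s s' : kpow M h.+1 s s' = \sum_u M s u * kpow M h u s'.
Proof.
elim: h s s' => [|h IH] s s'.
  by rewrite kpowS; under eq_bigr do rewrite kpow0; rewrite sum_dirac_mull sum_dirac_mulr.
rewrite kpowS; under eq_bigr => u _ do rewrite IH big_distrl /=.
rewrite exchange_big /=; apply: eq_bigr => v _.
by rewrite [RHS]big_distrr /=; apply: eq_bigr => u _; rewrite mulrA.
Qed.

Lemma kiter0 M r s : kiter M r 0 s = r s.
Proof. by rewrite /kiter; under eq_bigr do rewrite kpow0; exact: sum_dirac_mull. Qed.

Lemma kiterS M r h s : kiter M r h.+1 s = \sum_u M s u * kiter M r h u.
Proof.
rewrite /kiter; under eq_bigr => s' _ do rewrite kpowSl big_distrl /=.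
rewrite exchange_big /=; apply: eq_bigr => u _; rewrite big_distrr /=.
by apply: eq_bigr => v _; rewrite mulrA.
Qed.

Lemma kiter_ge0 M r h s : (forall u w, 0 <= M u w) -> (forall u, 0 <= r u) ->
  0 <= kiter M r h s.
Proof.
move=> M0 r0; elim: h s => [|h IH] s; first by rewrite kiter0.
by rewrite kiterS sumr_ge0 // => u _; rewrite mulr_ge0.
Qed.

Section Contraction.
Variables (M : S -> S -> R) (g : R).
Hypotheses (g_ge0 : 0 <= g) (g_lt1 : g < 1) (hM : row_norm_le M g).

Lemma norm_kiter_le r (B : R) h s : (forall s, `|r s| <= B) ->
  `|kiter M r h s| <= B * g ^+ h.
Proof.
move=> hr; have B0 : 0 <= B by apply: le_trans (hr s).
elim: h s => [|h IH] s; first by rewrite kiter0 expr0 mulr1.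
rewrite kiterS exprS mulrCA.
by apply: norm_sum_mul_le => //; rewrite mulr_ge0 ?exprn_ge0.
Qed.

Lemma resolvent_cvg r s : cvgn (series (fun h => kiter M r h s)).
Proof.
apply: normed_cvg; pose B := \sum_u `|r u|.
apply: (@series_le_cvg _ _ (geometric B g)) => [h|h|h|] /=.
- exact: normr_ge0.
- by rewrite mulr_ge0 ?exprn_ge0 ?sumr_ge0.
- by apply: norm_kiter_le => u; exact: le_sum_norm.
- by apply: is_cvg_geometric_series; rewrite ger0_norm.
Qed.

Lemma resolventE r s : resolvent M r s = r s + \sum_u M s u * resolvent M r u.
Proof.
have cv u : series (fun h => kiter M r h u) @ \oo --> resolvent M r u.
  exact: resolvent_cvg.
have shift : (fun k => series (fun h => kiter M r h s) k.+1) =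
             (fun k => r s + \sum_u M s u * series (fun h => kiter M r h u) k).
  apply: funext => k; rewrite /series /= big_nat_recl // kiter0; congr (_ + _).
  under eq_bigr => h _ do rewrite kiterS.
  by rewrite exchange_big /=; apply: eq_bigr => u _; rewrite big_distrr.
have lim_shift : (fun k => series (fun h => kiter M r h s) k.+1) @ \oo --> resolvent M r s.
  by rewrite (cvg_shiftS (series _)); exact: cv.
have lim_split : (fun k => r s + \sum_u M s u * series (fun h => kiter M r h u) k)
    @ \oo --> r s + \sum_u M s u * resolvent M r u.
  apply: cvgD; first exact: cvg_cst.
  apply: (@cvg_big R S +%R 0 xpredT add_continuous) => // u _.
  exact: cvgMl_tmp (cv u).
by rewrite shift in lim_shift; exact: cvg_unique lim_shift lim_split.
Qed.

Lemma norm_le_of_fixpoint (B : R) (Z w : S -> R) :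
  (forall s, Z s = w s + \sum_u M s u * Z u) -> (forall s, `|w s| <= B) ->
  forall s, `|Z s| <= B / (1 - g).
Proof.
move=> hZ hw s0.
pose m := \big[Num.max/0]_u `|Z u|.
have Z_le_m s : `|Z s| <= m by rewrite /m (bigD1 s) //= le_max lexx.
have B0 : 0 <= B by apply: le_trans (hw s0).
have m0 : 0 <= m by apply: le_trans (Z_le_m s0).
have Z_le s : `|Z s| <= B + g * m.
  rewrite hZ; apply: le_trans (ler_normD _ _) _; apply: lerD => //.
  exact: norm_sum_mul_le.
have m_le : m <= B + g * m.
  apply: (big_ind (fun v => v <= B + g * m)) => //.
  - by rewrite addr_ge0 // mulr_ge0.
  - by move=> x y hx hy; rewrite ge_max hx hy.
apply: le_trans (Z_le_m s0) _; rewrite ler_pdivlMr ?subr_gt0 //.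
by rewrite mulrBr mulr1; lra.
Qed.

Lemma resolvent_unique r (Z : S -> R) :
  (forall s, Z s = r s + \sum_u M s u * Z u) -> forall s, Z s = resolvent M r s.
Proof.
move=> hZ s; apply/eqP; rewrite -subr_eq0 -normr_le0.
have := @norm_le_of_fixpoint 0 (fun s => Z s - resolvent M r s) (fun=> 0).
rewrite mul0r; apply=> [u|u]; last by rewrite normr0.
by rewrite hZ resolventE sum_mulBr; ring.
Qed.

Lemma resolvent_ge0 r s : (forall u w, 0 <= M u w) -> (forall u, 0 <= r u) ->
  0 <= resolvent M r s.
Proof.
move=> M0 r0; apply: limr_ge; first exact: resolvent_cvg.
by near=> k; apply: sumr_ge0 => h _; exact: kiter_ge0.
Unshelve. all: by end_near.
Qed.

Lemma resolvent_dirac_ge1 s : (forall u w, 0 <= M u w) -> 1 <= resolvent M (dirac s) s.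
Proof.
move=> M0; rewrite resolventE /dirac eqxx lerDl.
by apply: sumr_ge0 => u _; rewrite mulr_ge0 // resolvent_ge0 // => v; exact: ler0n.
Qed.

Lemma resolvent_dirac_decomp r s0 :
  resolvent M r s0 = \sum_s r s * resolvent M (dirac s) s0.
Proof.
symmetry; apply: (resolvent_unique (Z := fun s0 => \sum_s r s * resolvent M (dirac s) s0)).
move=> {}s0; under eq_bigr => s _ do rewrite resolventE mulrDr.
rewrite big_split /=; congr (_ + _).
  by under eq_bigr do rewrite diracC; exact: sum_dirac_mulr.
under eq_bigr => s _ do rewrite big_distrr /=.
rewrite exchange_big /=; apply: eq_bigr => u _; rewrite big_distrr /=.
by apply: eq_bigr => s _; rewrite mulrCA.
Qed.

Lemma performance_difference r (W rho : S -> R) :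
  \sum_s (\sum_s0 rho s0 * resolvent M (dirac s) s0) * (r s + \sum_w M s w * W w - W s)
  = \sum_s0 rho s0 * (resolvent M r s0 - W s0).
Proof.
pose adv s := r s + \sum_w M s w * W w - W s.
have gap s0 : resolvent M r s0 - W s0 = resolvent M adv s0.
  apply: (resolvent_unique (Z := fun s0 => resolvent M r s0 - W s0)) => u.
  by rewrite resolventE /adv sum_mulBr; ring.
under [RHS]eq_bigr => s0 _ do rewrite gap resolvent_dirac_decomp big_distrr /=.
rewrite exchange_big /=; apply: eq_bigr => s _; rewrite big_distrl /=.
by apply: eq_bigr => s0 _; rewrite mulrCA mulrC.
Qed.

End Contraction.

Section Perturbation.
Variables (M D : S -> S -> R) (r e : S -> R) (g : R).
Hypotheses (g_ge0 : 0 <= g) (g_lt1 : g < 1) (hM : row_norm_le M g).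

Local Notation Mt t := (fun u w => M u w + t * D u w).
Local Notation Vt t := (resolvent (Mt t) (fun u => r u + t * e u)).
Local Notation V0 := (resolvent M r).
Local Notation G := (resolvent M (fun u => e u + \sum_w D u w * V0 w)).
Local Notation K := (\sum_u \sum_w `|D u w|).
Local Notation d := ((1 - g) / 2 / (K + 1)).

Let K_ge0 : 0 <= K. Proof. by rewrite sumr_ge0 // => u _; rewrite sumr_ge0. Qed.

Let row_norm_D_le u : \sum_w `|D u w| <= K.
Proof. by apply: (@le_sum_nonneg (fun v => \sum_w `|D v w|)) => v; rewrite sumr_ge0. Qed.

Let d_gt0 : 0 < d.
Proof. by rewrite !divr_gt0 ?subr_gt0 // (le_lt_trans K_ge0) ?ltrDl. Qed.

Let row_norm_Mt t : `|t| <= d -> row_norm_le (Mt t) ((1 + g) / 2).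
Proof.
move=> td u; have dK : d * K <= (1 - g) / 2.
  by have g1 := g_lt1; have K0 := K_ge0; rewrite mulrAC ler_pdivrMr ?ler_wpM2l //; lra.
apply: le_trans (_ : \sum_w (`|M u w| + `|t| * `|D u w|) <= _).
  by apply: ler_sum => w _; rewrite -normrM ler_normD.
rewrite big_split /= -big_distrr /=.
have : `|t| * \sum_w `|D u w| <= d * K by rewrite ler_pM ?sumr_ge0 ?row_norm_D_le.
by have := hM u; have := g_lt1; lra.
Qed.

Let VtE t s : `|t| <= d ->
  Vt t s = r s + t * e s + \sum_u (M s u + t * D s u) * Vt t u.
Proof.
by move=> td; have g0 := g_ge0; have g1 := g_lt1; apply: (resolventE _ _ (row_norm_Mt td)); lra.
Qed.

Let Vt_bounded : exists2 B, 0 <= B & forall t s, `|t| <= d -> `|Vt t s| <= B.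
Proof.
have g0 := g_ge0; have g1 := g_lt1; have d0 := d_gt0.
pose B := \sum_u (`|r u| + d * `|e u|).
have B0 : 0 <= B by rewrite sumr_ge0 // => u _; rewrite addr_ge0 // mulr_ge0 // ltW.
exists (B / (1 - (1 + g) / 2)); first by rewrite divr_ge0 //; lra.
move=> t s td; apply: (norm_le_of_fixpoint _ _ (row_norm_Mt td) (fun u => VtE u td)); try lra.
move=> u; apply: le_trans (ler_normD _ _) _; rewrite normrM.
apply: le_trans (_ : `|r u| + d * `|e u| <= _); first by rewrite lerD2l ler_wpM2r.
by apply: (@le_sum_nonneg (fun u => `|r u| + d * `|e u|)) => v; rewrite addr_ge0 // mulr_ge0 // ltW.
Qed.

Let Vt_sub_V0E t s : `|t| <= d -> Vt t s - V0 s =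
  t * (e s + \sum_u D s u * Vt t u) + \sum_u M s u * (Vt t u - V0 u).
Proof.
move=> td; rewrite VtE // (resolventE g_ge0 g_lt1 hM r s) sum_mulDl_scale sum_mulBr.
ring.
Qed.

Let Vt_lipschitz :
  exists2 C, 0 <= C & forall t s, `|t| <= d -> `|Vt t s - V0 s| <= `|t| * C.
Proof.
have [B B0 VtB] := Vt_bounded.
exists ((\sum_u `|e u| + K * B) / (1 - g)).
  apply: divr_ge0; last by rewrite subr_ge0 ltW.
  by rewrite addr_ge0 ?mulr_ge0 // sumr_ge0.
move=> t s td; rewrite mulrA.
apply: (norm_le_of_fixpoint g_ge0 g_lt1 hM (fun s => Vt_sub_V0E s td)) => u.
rewrite normrM ler_wpM2l //; apply: le_trans (ler_normD _ _) (lerD (le_sum_norm _ _) _).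
by apply: norm_sum_mul_le => // v; exact: VtB.
Qed.

(* G solves G = e + D V0 + M G, so the error of the difference quotient is a
   fixpoint of M driven by D (Vt - V0) = O(t). *)
Let Vt_diff_quotient : exists2 C, 0 <= C & forall t s, t != 0 -> `|t| <= d ->
  `|t^-1 * (Vt t s - V0 s) - G s| <= `|t| * C.
Proof.
have [C C0 VtC] := Vt_lipschitz.
exists (K * C / (1 - g)).
  by apply: divr_ge0; [rewrite mulr_ge0 | rewrite subr_ge0 ltW].
move=> t s t0 td; have -> : `|t| * (K * C / (1 - g)) = K * (`|t| * C) / (1 - g) by ring.
apply: (norm_le_of_fixpoint g_ge0 g_lt1 hM
  (Z := fun s => t^-1 * (Vt t s - V0 s) - G s)
  (w := fun s => \sum_u D s u * (Vt t u - V0 u))) => [u|u].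
  rewrite Vt_sub_V0E // (resolventE g_ge0 g_lt1 hM _ u) mulrDr mulrA mulVf // mul1r.
  by rewrite !sum_mulBr sum_mulrCA sum_mulBr; ring.
by apply: norm_sum_mul_le => // [|v]; [rewrite mulr_ge0 | exact: VtC].
Qed.

Lemma derive_resolvent (rho : S -> R) :
  derive1 (fun t => \sum_s rho s *
    resolvent (fun u w => M u w + t * D u w) (fun u => r u + t * e u) s) 0
  = \sum_s rho s * resolvent M (fun u => e u + \sum_w D u w * resolvent M r w) s.
Proof.
have [C C0 hC] := Vt_diff_quotient.
apply: (derive1_at0_of_error_bound d_gt0 (C := (\sum_s `|rho s|) * C)) => [|t t0 td].
  by rewrite mulr_ge0 ?sumr_ge0.
have -> : (fun u w => M u w + 0 * D u w) = M.
  by apply: funext => u; apply: funext => w; rewrite mul0r addr0.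
have -> : (fun u => r u + 0 * e u) = r by apply: funext => u; rewrite mul0r addr0.
rewrite -sumrB mulr_sumr -sumrB mulrCA.
under eq_bigr do rewrite -mulrBr mulrCA -mulrBr.
by apply: norm_sum_mul_le => // [|s]; [rewrite mulr_ge0 | exact: hC].
Qed.

End Perturbation.
End Kernel.

Arguments dirac {R S}.

Lemma sum_dffun_prod (R : comNzRingType) (I : finType) (T_ : I -> finType)
    (F : forall i, T_ i -> R) :
  \sum_(f : {dffun forall i, T_ i}) \prod_i F i (f i) = \prod_i \sum_(a : T_ i) F i a.
Proof.
pose P_ i := [ffun a : T_ i => F i a].
transitivity (\prod_i \sum_(a : T_ i) P_ i a); last first.
  by apply: eq_bigr => i _; apply: eq_bigr => a _; rewrite ffunE.
under eq_bigr => i _ do rewrite (big_tag (fun j => P_ j) i).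
rewrite bigA_distr_big_dep -big_fprod.
rewrite (reindex (@dffun_of_fprod _ T_)); last first.
  by exists (@fprod_of_dffun _ T_) => f _; [apply: dffun_of_fprodK | apply: fprod_of_dffunK].
by apply: eq_bigr => t _; apply: eq_bigr => i _; rewrite ffunE /P_ ffunE.
Qed.

Lemma uniform_lt1 (R : realType) (T : finType) (f : T -> R) : (forall t, f t < 1) ->
  exists g : R, [/\ 0 <= g, g < 1 & forall t, f t <= g].
Proof.
move=> f_lt1; exists (\big[Num.max/0]_t Num.max 0 (f t)); split.
- by apply: (big_ind (fun v => 0 <= v)) => // [x y x0 _|t _]; rewrite le_max ?x0 ?lexx.
- apply: (big_ind (fun v => v < 1)) => // [x y x1 y1|t _]; first by rewrite gt_max x1.
  by rewrite gt_max ltr01 f_lt1.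
- by move=> t; rewrite (bigD1 t) //= !le_max lexx orbT.
Qed.

Section Game.
Variables (R : realType) (n : nat) (S : finType) (A : 'I_n -> finType).
Variables (P : S -> jact A -> S -> R) (Rw : 'I_n -> S -> jact A -> R) (rho : S -> R).
Hypotheses (P_ge0 : forall s a s', 0 <= P s a s')
           (P_lt1 : forall s a, \sum_(s' : S) P s a s' < 1).
Implicit Types (x y : profile R S A) (b : jact A).

Lemma Ph_kpow x h s s' : Ph P x h s s' = kpow (Ppi P x) h s s'.
Proof. by elim: h s s' => //= h IH s s'; apply: eq_bigr => u _; rewrite IH. Qed.

Lemma V_resolvent x i s : V P Rw x i s = resolvent (Ppi P x) (rpi Rw x i) s.
Proof.
by rewrite /V /resolvent /kiter; congr (limn (series _)); apply: funext => h;
  apply: eq_bigr => s' _; rewrite Ph_kpow.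
Qed.

Lemma dvis_resolvent x s :
  dvis P rho x s = \sum_s0 rho s0 * resolvent (Ppi P x) (dirac s) s0.
Proof.
apply: eq_bigr => s0 _; rewrite /resolvent /kiter.
congr (_ * _); congr (limn (series _)); apply: funext => h.
by rewrite sum_dirac_mulr Ph_kpow.
Qed.

Lemma jprobD1 x i u b : jprob x u b = x i u (b i) * \prod_(j | j != i) x j u (b j).
Proof. by rewrite /jprob (bigD1 i). Qed.

Lemma jprob_ge0 x u b : inX x -> 0 <= jprob x u b.
Proof. by move=> hx; apply: prodr_ge0 => i _; case: (hx i u). Qed.

Lemma jprob_sum1 x u : inX x -> \sum_b jprob x u b = 1.
Proof.
by move=> hx; rewrite /jprob (sum_dffun_prod (fun i a => x i u a)) big1 // => i _; case: (hx i u).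
Qed.

Lemma Ppi_ge0 x u w : inX x -> 0 <= Ppi P x u w.
Proof. by move=> hx; apply: sumr_ge0 => b _; rewrite mulr_ge0 ?jprob_ge0. Qed.

Lemma Ppi_row_norm x : inX x -> exists g, [/\ 0 <= g, g < 1 & row_norm_le (Ppi P x) g].
Proof.
move=> hx; have [g [g0 g1 hg]] := uniform_lt1 (fun p : S * jact A => P_lt1 p.1 p.2).
exists g; split=> // u.
have -> : \sum_w `|Ppi P x u w| = \sum_b jprob x u b * \sum_w P u b w.
  under eq_bigr => w _ do rewrite ger0_norm ?Ppi_ge0 //.
  by rewrite /Ppi exchange_big /=; apply: eq_bigr => b _; rewrite big_distrr.
apply: le_trans (_ : \sum_b jprob x u b * g <= _).
  by apply: ler_sum => b _; rewrite ler_wpM2l ?jprob_ge0 //; exact: (hg (u, b)).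
by rewrite -big_distrl /= jprob_sum1 ?mul1r.
Qed.

Lemma deviate_self x i (z : S -> A i -> R) u (c : A i) : deviate x z u c = z u c.
Proof. by rewrite /deviate /dfwith; case: eqP => // e; rewrite eq_axiomK. Qed.

Lemma deviate_other x i (z : S -> A i -> R) j u (c : A j) :
  i != j -> deviate x z u c = x j u c.
Proof. by rewrite /deviate /dfwith; case: eqP. Qed.

Lemma perturb_self x i s (a : A i) t u (c : A i) :
  perturb x s a t u c = x i u c + t * ((u == s) && (c == a))%:R.
Proof. by rewrite /perturb /dfwith; case: eqP => // e; rewrite eq_axiomK. Qed.

Lemma perturb_other x i s (a : A i) t j u (c : A j) :
  i != j -> perturb x s a t u c = x j u c.
Proof. by rewrite /perturb /dfwith; case: eqP. Qed.

Lemma jprob_deviate x i (z : S -> A i -> R) u b :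
  jprob (deviate x z) u b = z u (b i) * \prod_(j | j != i) x j u (b j).
Proof.
rewrite (jprobD1 _ i) deviate_self; congr (_ * _).
by apply: eq_bigr => j ji; rewrite deviate_other // eq_sym.
Qed.

Definition djprob x i s (a : A i) u b : R :=
  ((u == s) && (b i == a))%:R * \prod_(j | j != i) x j u (b j).

Definition dPpi x i s (a : A i) u w := \sum_b djprob x s a u b * P u b w.

Definition drpi x i s (a : A i) u := \sum_b djprob x s a u b * Rw i u b.

Lemma jprob_perturb x i s (a : A i) t u b :
  jprob (perturb x s a t) u b = jprob x u b + t * djprob x s a u b.
Proof.
rewrite (jprobD1 _ i) [in RHS](jprobD1 _ i) perturb_self /djprob.
rewrite (eq_bigr (fun j => x j u (b j))); first by ring.
by move=> j ji; rewrite perturb_other // eq_sym.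
Qed.

Lemma Ppi_perturb x i s (a : A i) t u w :
  Ppi P (perturb x s a t) u w = Ppi P x u w + t * dPpi x s a u w.
Proof.
rewrite /Ppi /dPpi; under eq_bigr do rewrite jprob_perturb mulrDl -mulrA.
by rewrite big_split /= -big_distrr.
Qed.

Lemma rpi_perturb x i s (a : A i) t u :
  rpi Rw (perturb x s a t) i u = rpi Rw x i u + t * drpi x s a u.
Proof.
rewrite /rpi /drpi; under eq_bigr do rewrite jprob_perturb mulrDl -mulrA.
by rewrite big_split /= -big_distrr.
Qed.

Definition Qval x i s (a : A i) : R :=
  \sum_(b : jact A) ((b i == a)%:R * \prod_(j | j != i) x j s (b j)) *
         (Rw i s b + \sum_w P s b w * V P Rw x i w).

Lemma drpi_dPpi_Qval x i s (a : A i) u :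
  drpi x s a u + \sum_w dPpi x s a u w * V P Rw x i w = dirac s u * Qval x s a.
Proof.
rewrite /drpi /dPpi /Qval /dirac.
under [X in _ + X]eq_bigr => w _ do rewrite big_distrl /=.
rewrite exchange_big -big_split /= big_distrr /=; apply: eq_bigr => b _.
rewrite /djprob; case: (eqVneq u s) => [->|us] /=; last first.
  by rewrite !mul0r add0r big1 // => w _; rewrite !mul0r.
rewrite mul1r mulrDr; congr (_ + _); rewrite big_distrr /=.
by apply: eq_bigr => w _; rewrite mulrA.
Qed.

Lemma FG_Qval x i s (a : A i) : inX x -> FG P Rw rho x s a = - (dvis P rho x s * Qval x s a).
Proof.
move=> hx; have [g [g0 g1 hM]] := Ppi_row_norm hx; rewrite /FG.
have -> : (fun t => Vrho P Rw rho (perturb x s a t) i) =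
    (fun t => \sum_s0 rho s0 * resolvent (fun u w => Ppi P x u w + t * dPpi x s a u w)
                                         (fun u => rpi Rw x i u + t * drpi x s a u) s0).
  apply: funext => t; apply: eq_bigr => s0 _; rewrite V_resolvent.
  congr (_ * resolvent _ _ _); apply: funext => u; last by rewrite rpi_perturb.
  by apply: funext => w; rewrite Ppi_perturb.
rewrite (derive_resolvent _ _ _ g0 g1 hM) dvis_resolvent big_distrl /=; congr (- _).
apply: eq_bigr => s0 _; rewrite (resolvent_dirac_decomp g0 g1 hM) -mulrA; congr (_ * _).
have Q_eq u : drpi x s a u + \sum_w dPpi x s a u w * resolvent (Ppi P x) (rpi Rw x i) w
    = dirac s u * Qval x s a.
  by rewrite -drpi_dPpi_Qval; under [in RHS]eq_bigr do rewrite V_resolvent.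
under eq_bigr do rewrite Q_eq mulrAC.
by rewrite -big_distrl /= sum_dirac_mull.
Qed.

Lemma sum_mul_Qval x i s (z : S -> A i -> R) :
  \sum_(a : A i) z s a * Qval x s a =
  \sum_(b : jact A) (z s (b i) * \prod_(j | j != i) x j s (b j)) *
         (Rw i s b + \sum_w P s b w * V P Rw x i w).
Proof.
rewrite /Qval; under eq_bigr => a _ do rewrite big_distrr /=.
rewrite exchange_big /=; apply: eq_bigr => b _.
rewrite (bigD1 (b i)) //= eqxx mul1r [X in _ + X]big1 ?addr0; first by rewrite !mulrA.
by move=> a ab; rewrite eq_sym (negbTE ab) !mul0r mulr0.
Qed.

Lemma sum_jprob_bellman y i s (W : S -> R) :
  \sum_(b : jact A) jprob y s b * (Rw i s b + \sum_w P s b w * W w) =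
  rpi Rw y i s + \sum_w Ppi P y s w * W w.
Proof.
under eq_bigr do rewrite mulrDr.
rewrite big_split /=; congr (_ + _).
under [RHS]eq_bigr => w _ do rewrite /Ppi big_distrl /=.
rewrite exchange_big /=; apply: eq_bigr => b _; rewrite big_distrr /=.
by apply: eq_bigr => w _; rewrite mulrA.
Qed.

Lemma inX_deviate x y i : inX x -> inX y -> inX (deviate x (y i)).
Proof.
move=> hx hy j u; have [<-|ij] := eqVneq i j.
  by under eq_bigr do rewrite deviate_self; under eq_forall do rewrite deviate_self; exact: hy.
under eq_bigr do rewrite deviate_other //; under eq_forall do rewrite deviate_other //.
exact: hx.
Qed.

Lemma dvis_gt0 x s : (forall s, 0 < rho s) -> inX x -> 0 < dvis P rho x s.
Proof.
move=> rho_gt0 hx; have [g [g0 g1 hM]] := Ppi_row_norm hx.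
have Ppi0 := fun u w => Ppi_ge0 u w hx.
rewrite dvis_resolvent (bigD1 s) //=; apply: ltr_wpDr.
  apply: sumr_ge0 => u _; apply: mulr_ge0; first exact: ltW.
  by apply: (resolvent_ge0 g0 g1 hM u Ppi0) => v; exact: ler0n.
apply: (lt_le_trans (rho_gt0 s)); rewrite ler_peMr ?(ltW (rho_gt0 s)) //.
exact: resolvent_dirac_ge1 g0 g1 hM _ Ppi0.
Qed.

Lemma sum_FG_Lambda_state x xs i s : (forall s, 0 < rho s) -> inX x ->
  \sum_(a : A i) (x i s a - xs i s a) * (FG P Rw rho x s a * Lambda P rho x xs s a) =
  dvis P rho (deviate x (xs i)) s *
    (rpi Rw (deviate x (xs i)) i s
     + \sum_w Ppi P (deviate x (xs i)) s w * V P Rw x i w - V P Rw x i s).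
Proof.
move=> rho_gt0 hx; set x' := deviate x (xs i).
have [g [g0 g1 hM]] := Ppi_row_norm hx.
have dvis_neq0 : dvis P rho x s != 0 by rewrite gt_eqF // dvis_gt0.
transitivity (dvis P rho x' s *
  (\sum_(a : A i) xs i s a * Qval x s a - \sum_(a : A i) x i s a * Qval x s a)).
  rewrite -sumrB big_distrr /=; apply: eq_bigr => a _.
  by rewrite FG_Qval // /Lambda -/x'; field.
congr (_ * (_ - _)).
  rewrite sum_mul_Qval -sum_jprob_bellman; apply: eq_bigr => b _.
  by rewrite jprob_deviate.
rewrite sum_mul_Qval V_resolvent (resolventE g0 g1 hM).
under [in RHS]eq_bigr do rewrite -V_resolvent.
rewrite -sum_jprob_bellman; apply: eq_bigr => b _.
by rewrite (jprobD1 _ i).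
Qed.

Lemma sum_FG_Lambda x xs i : (forall s, 0 < rho s) -> inX x -> inX xs ->
  \sum_(s : S) \sum_(a : A i)
     (x i s a - xs i s a) * (FG P Rw rho x s a * Lambda P rho x xs s a)
  = \sum_s0 rho s0 * (V P Rw (deviate x (xs i)) i s0 - V P Rw x i s0).
Proof.
move=> rho_gt0 hx hxs; set x' := deviate x (xs i).
have [g [g0 g1 hM]] := Ppi_row_norm (inX_deviate i hx hxs).
under eq_bigr do rewrite sum_FG_Lambda_state // dvis_resolvent.
rewrite (performance_difference g0 g1 hM); apply: eq_bigr => s0 _.
by rewrite [V P Rw x' i s0]V_resolvent.
Qed.

Lemma sum_jprob_marginal x u c (a : A c) : inX x ->
  \sum_(b : jact A) jprob x u b * (b c == a)%:R = x c u a.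
Proof.
move=> hx.
pose F j (a' : A j) := x j u a' * (if j == c then (Tagged A a' == Tagged A a)%:R else 1).
have jprobF b : jprob x u b * (b c == a)%:R = \prod_j F j (b j).
  rewrite (jprobD1 _ c) /F [in RHS](bigD1 c) //= eqxx eq_Tagged /= mulrAC.
  by congr (_ * _); apply: eq_bigr => j jc; rewrite (negbTE jc) mulr1.
under eq_bigr do rewrite jprobF.
rewrite (sum_dffun_prod F) (bigD1 c) //= [X in _ * X]big1 ?mulr1.
  rewrite /F eqxx (bigD1 a) //= eq_Tagged /= eqxx mulr1 big1 ?addr0 //.
  by move=> a' a'a; rewrite eq_Tagged /= (negbTE a'a) mulr0.
move=> j jc; rewrite /F (negbTE jc); under eq_bigr do rewrite mulr1.
by case: (hx j u).
Qed.

Lemma Ppi_single_controller c x y : single_controller P c -> inX x -> inX y ->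
  (forall u (a : A c), x c u a = y c u a) -> Ppi P x = Ppi P y.
Proof.
move=> hc hx hy xy; apply: funext => u; apply: funext => w; rewrite /Ppi.
have [b0 _|no_act] := pickP (fun _ : jact A => true); last first.
  by rewrite !big1 // => b; have := no_act b.
pose bc (a : A c) : jact A := finfun (@dfwith _ (fun j => A j) (fun j => b0 j) c a).
have P_bc b : P u b w = P u (bc (b c)) w.
  apply: hc; rewrite /bc ffunE /dfwith.
  by case: eqP => // e; rewrite eq_axiomK.
have Ppi_marginal z : inX z ->
    \sum_b jprob z u b * P u b w = \sum_(a : A c) z c u a * P u (bc a) w.
  move=> hz; under eq_bigr do rewrite P_bc.
  transitivity (\sum_b \sum_(a : A c) jprob z u b * (b c == a)%:R * P u (bc a) w).
    apply: eq_bigr => b _; rewrite (bigD1 (b c)) //= eqxx mulr1 big1 ?addr0 //.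
    by move=> a' a'b; rewrite eq_sym (negbTE a'b) mulr0 mul0r.
  by rewrite exchange_big /=; apply: eq_bigr => a _; rewrite -big_distrl /= sum_jprob_marginal.
by rewrite !Ppi_marginal //; apply: eq_bigr => a _; rewrite xy.
Qed.

Lemma dvis_single_controller c x y : single_controller P c -> inX x -> inX y ->
  (forall u (a : A c), x c u a = y c u a) -> dvis P rho x = dvis P rho y.
Proof.
move=> hc hx hy xy; apply: funext => s.
by rewrite !dvis_resolvent (Ppi_single_controller hc hx hy xy).
Qed.

Lemma Lambda_single_controller c x xs i s (a : A i) :
  single_controller P c -> (forall s, 0 < rho s) -> inX x -> inX xs ->
  Lambda P rho x xs s a =
  (if i == c then (dvis P rho x s)^-1 else 1) * (if i == c then dvis P rho xs s else 1).
Proof.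
move=> hc rho_gt0 hx hxs; have hx' := inX_deviate i hx hxs.
rewrite /Lambda; case: (eqVneq i c) => [ic|ic].
  subst c; rewrite (dvis_single_controller hc hx' hxs (deviate_self _ _)).
  by rewrite mulrC.
rewrite (dvis_single_controller hc hx' hx (fun u v => deviate_other _ _ u v ic)) mulr1 divff //.
by rewrite gt_eqF // dvis_gt0.
Qed.

Lemma sum_players_FG_Lambda x xs : (forall s, 0 < rho s) -> inX x -> inX xs ->
  \sum_(i < n) \sum_(s : S) \sum_(a : A i)
     (x i s a - xs i s a) * (FG P Rw rho x s a * Lambda P rho x xs s a)
  = \sum_(i < n) Vrho P Rw rho (deviate x (xs i)) i - \sum_(i < n) Vrho P Rw rho x i.
Proof.
move=> rho_gt0 hx hxs; rewrite -sumrB; apply: eq_bigr => i _.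
by rewrite sum_FG_Lambda // /Vrho -sumrB; apply: eq_bigr => s0 _; rewrite mulrBr.
Qed.

End Game.

Theorem lemma1 (R : realType) (n : nat) (S : finType) (A : 'I_n -> finType)
  (P : S -> jact A -> S -> R) (Rw : 'I_n -> S -> jact A -> R) (rho : S -> R)
  (xs : profile R S A) :
  (forall i, 0 < #|A i|)%N ->
  (forall s a s', 0 <= P s a s') ->
  (forall s a, \sum_(s' : S) P s a s' < 1) ->
  (forall i s a, -1 <= Rw i s a <= 1) ->
  (forall s, 0 < rho s) -> \sum_(s : S) rho s = 1 ->
  inX xs ->
  (forall x : profile R S A, inX x ->
     0 <= \sum_(i < n) Vrho P Rw rho (deviate x (xs i)) i
          - \sum_(i < n) Vrho P Rw rho x i) ->
  (forall x : profile R S A, inX x ->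
     0 <= \sum_(i < n) \sum_(s : S) \sum_(a : A i)
            (x i s a - xs i s a) * (FG P Rw rho x s a * Lambda P rho x xs s a))
  /\
  (forall c : 'I_n, single_controller P c ->
   forall x : profile R S A, inX x ->
     0 <= \sum_(i < n) \sum_(s : S) \sum_(a : A i)
            (x i s a - xs i s a) *
            (FG P Rw rho x s a
             * (if i == c then (dvis P rho x s)^-1 else 1)
             * (if i == c then dvis P rho xs s else 1))).
Proof.
move=> _ P_ge0 P_lt1 _ rho_gt0 _ hxs gap_ge0.
split=> [x hx|c hc x hx]; last first.
  under eq_bigr => i _ do under eq_bigr => s _ do under eq_bigr => a _ do
    rewrite -mulrA -(Lambda_single_controller P_ge0 P_lt1 s a hc rho_gt0 hx hxs).
all: by rewrite sum_players_FG_Lambda //; exact: gap_ge0.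
Qed.
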